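(* Let $\vec\sigma$ be a preference profile, $d$ a pseudometric consistent with $\vec\sigma$, $X\in\mathcal A$, and $w_X$ an $X$-truncated weight function for $\vec\sigma$ with $\sum_{Y}w_X^+(Y)d(X,Y)>0$. Suppose $\mathrm{SC}(X,d)\le D\cdot\min_{Z\in\mathcal A}\mathrm{SC}(Z,d)$. Then for every probability distribution $p$ over $\mathcal A$, $$\frac{\mathbb E_{Y\sim p}[\mathrm{SC}(Y,d)]}{\min_{Z\in\mathcal A}\mathrm{SC}(Z,d)}\le D\left(1+\frac{2n\sum_{Y\in\mathcal A}p(Y)\,d(X,Y)}{\sum_{Y\in\mathcal A}w_X^+(Y)\,d(X,Y)}\right).$$
   Context: Setting: $n$ agents $\mathcal N$, $m$ alternatives $\mathcal A$, each agent $i$ with a strict ranking; $X\succ_iY$ means $i$ ranks $X$ above $Y$, and $Y\succeq_iX$ means $Y\succ_iX$ or $Y=X$. A pseudometric $d$ on $\mathcal N\cup\mathcal A$ is consistent with $\vec\sigma$ if $X\succ_iY\Rightarrow d(i,X)\le d(i,Y)$; $\mathrm{SC}(X,d)=\sum_{i}d(i,X)$. An $X$-truncated weight function is $w:\mathcal N\times\mathcal A\to[0,1]$ such that for every agent $i$: $w(i,Y)=0$ whenever $X\succ_iY$, and $\sum_{Y:\,Y\succeq_iX}w(i,Y)=1$. Write $w^+(Y)=\sum_{i\in\mathcal N}w(i,Y)$. *)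

From mathcomp Require Import all_boot all_order all_algebra.
Set Implicit Arguments. Unset Strict Implicit. Unset Printing Implicit Defensive.
Import Order.TTheory GRing.Theory Num.Theory.
Local Open Scope ring_scope.

(* Agents N and alternatives A are finite types; points of the (pseudo)metric
   space are N + A (agent i is [inl i], alternative X is [inr X]). *)

(* A preference profile: each agent i has a strict ranking of A, encoded by
   an injective rank function; smaller rank = more preferred. *)
Record profile (N A : finType) := Profile {
  rank : N -> A -> nat;
  rank_inj : forall i, injective (rank i) }.

Definition prefers (N A : finType) (s : profile N A) (i : N) (X Y : A) : bool :=
  (rank s i X < rank s i Y)%N.

Definition prefers_eq (N A : finType) (s : profile N A) (i : N) (Y X : A) : bool :=
  prefers s i Y X || (Y == X).

Definition pseudometric (T : Type) (R : numDomainType) (d : T -> T -> R) : Prop :=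
  [/\ forall x, d x x = 0,
      forall x y, 0 <= d x y,
      forall x y, d x y = d y x &
      forall x y z, d x z <= d x y + d y z].

Definition consistent (R : numDomainType) (N A : finType) (s : profile N A)
    (d : N + A -> N + A -> R) : Prop :=
  forall i X Y, prefers s i X Y -> d (inl i) (inr X) <= d (inl i) (inr Y).

Definition SC (R : numDomainType) (N A : finType) (d : N + A -> N + A -> R) (X : A) : R :=
  \sum_(i : N) d (inl i) (inr X).

(* min_{Z in A} SC(Z,d), for A nonempty (witnessed by X0) *)
Definition minSC (R : realDomainType) (N A : finType) (d : N + A -> N + A -> R) (X0 : A) : R :=
  \big[Num.min/SC d X0]_(Z : A) SC d Z.

Definition truncated_weight (R : numDomainType) (N A : finType) (s : profile N A)
    (X : A) (w : N -> A -> R) : Prop :=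
  [/\ forall i Y, 0 <= w i Y <= 1,
      forall i Y, prefers s i X Y -> w i Y = 0 &
      forall i, \sum_(Y : A | prefers_eq s i Y X) w i Y = 1].

Definition wplus (R : numDomainType) (N A : finType) (w : N -> A -> R) (Y : A) : R :=
  \sum_(i : N) w i Y.

Definition distribution (R : numDomainType) (A : finType) (p : A -> R) : Prop :=
  (forall Y, 0 <= p Y) /\ \sum_(Y : A) p Y = 1.

From mathcomp Require Import all_boot all_order all_algebra.
From mathcomp Require Import lra.
Import Order.TTheory GRing.Theory Num.Theory.
Set Implicit Arguments. Unset Strict Implicit. Unset Printing Implicit Defensive.
Local Open Scope ring_scope.

(* Write n = #|N|, T = E_{Y~p}[SC(Y,d)], K = E_{Y~p}[d(X,Y)] and
   S = sum_Y w^+(Y) d(X,Y).  Two metric facts carry the proof: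
   - by the triangle inequality through X, SC(Y) <= SC(X) + n d(X,Y), hence
     T <= SC(X) + n K;
   - for each agent i, the X-truncated weights of i sit on alternatives Y
     that i ranks weakly above X, which by consistency satisfy
     d(i,Y) <= d(i,X), hence d(X,Y) <= 2 d(i,X); the weights of i sum to 1,
     so summing over agents gives S <= 2 SC(X).
   The theorem then follows from a purely algebraic inequality combining
   these two bounds with the hypothesis SC(X) <= D * min_Z SC(Z). *)

Lemma ratio_bound (R : realFieldType) (T a D M S K : R) :
  0 < M -> 0 < S -> 0 <= K -> T <= a + K -> a <= D * M -> S <= 2 * a ->
  T / M <= D * (1 + 2 * K / S).
Proof.
move=> M_gt0 S_gt0 K_ge0 leTaK leaDM leS2a.
rewrite ler_pdivrMr //.
have invS_gt0 : 0 < S^-1 by rewrite invr_gt0.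
have SinvS : S * S^-1 = 1 by rewrite divff // gt_eqF.
set u := S^-1 in invS_gt0 SinvS *.
have Ku_ge0 : 0 <= K * u by rewrite mulr_ge0 // ltW.
have : 0 <= (2 * (D * M) - S) * (K * u) by rewrite mulr_ge0 // subr_ge0; lra.
nra.
Qed.

Section TruncatedWeights.
Variables (R : numDomainType) (N A : finType) (s : profile N A).

(* A strict ranking is total: an alternative that i does not rank strictly
   below X is ranked weakly above X. *)
Lemma not_below_prefers_eq (i : N) (X Y : A) :
  ~~ prefers s i X Y -> prefers_eq s i Y X.
Proof.
rewrite /prefers_eq /prefers -leqNgt leq_eqVlt => /orP [/eqP eq_rank|->//].
by rewrite (rank_inj eq_rank) eqxx orbT.
Qed.

(* An X-truncated weight function gives each agent total weight 1 over all
   alternatives, since it vanishes on those ranked strictly below X. *)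
Lemma truncated_weight_sum (X : A) (w : N -> A -> R) (i : N) :
  truncated_weight s X w -> \sum_(Y : A) w i Y = 1.
Proof.
case=> _ w_below w_sum.
rewrite (bigID (fun Y => prefers_eq s i Y X)) /= w_sum big1 ?addr0 // => Y.
apply: contraNeq => wY_neq0; apply: not_below_prefers_eq.
by apply: contra wY_neq0 => /w_below ->.
Qed.

Lemma consistent_closer (d : N + A -> N + A -> R) (i : N) (X Y : A) :
  consistent s d -> ~~ prefers s i X Y ->
  d (inl i) (inr Y) <= d (inl i) (inr X).
Proof.
move=> cons /not_below_prefers_eq; rewrite /prefers_eq.
by case/orP => [/cons //|/eqP ->].
Qed.

End TruncatedWeights.

Section SocialCost.
Variables (R : numDomainType) (N A : finType) (d : N + A -> N + A -> R).
Hypothesis d_metric : pseudometric d.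

(* Moving from X to Y costs every agent at most d(X,Y). *)
Lemma SC_triangle (X Y : A) : SC d Y <= SC d X + #|N|%:R * d (inr X) (inr Y).
Proof.
case: d_metric => _ _ _ d_tri.
rewrite /SC -sum1_card natr_sum mulr_suml -big_split /=.
by apply: ler_sum => i _; rewrite mul1r; exact: d_tri.
Qed.

Lemma expected_SC_bound (X : A) (p : A -> R) : distribution p ->
  \sum_(Y : A) p Y * SC d Y
    <= SC d X + #|N|%:R * \sum_(Y : A) p Y * d (inr X) (inr Y).
Proof.
case=> p_ge0 p_sum1.
apply: le_trans (_ : \sum_Y p Y * (SC d X + #|N|%:R * d (inr X) (inr Y)) <= _).
  by apply: ler_sum => Y _; apply: ler_wpM2l => //; exact: SC_triangle.
rewrite (eq_bigr (fun Y => SC d X * p Y + #|N|%:R * (p Y * d (inr X) (inr Y)))).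
  by rewrite big_split /= -!mulr_sumr p_sum1 mulr1.
by move=> Y _; rewrite mulrDr mulrC mulrCA.
Qed.

Lemma truncated_weight_distance (s : profile N A) (X Y : A) (w : N -> A -> R)
    (i : N) :
  consistent s d -> truncated_weight s X w ->
  w i Y * d (inr X) (inr Y) <= w i Y * (2 * d (inl i) (inr X)).
Proof.
case: d_metric => _ _ d_sym d_tri cons [w01 w_below _].
have [/w_below -> | not_below] := boolP (prefers s i X Y).
  by rewrite !mul0r.
apply: ler_wpM2l; first by case/andP: (w01 i Y).
apply: le_trans (d_tri _ (inl i) _) _.
rewrite [d (inr X) _]d_sym mulr_natl mulr2n lerD2l.
exact: consistent_closer cons not_below.
Qed.

Lemma weighted_distance_bound (s : profile N A) (X : A) (w : N -> A -> R) :
  consistent s d -> truncated_weight s X w ->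
  \sum_(Y : A) wplus w Y * d (inr X) (inr Y) <= 2 * SC d X.
Proof.
move=> cons tw.
rewrite /wplus.
rewrite (eq_bigr (fun Y => \sum_i w i Y * d (inr X) (inr Y))); last first.
  by move=> Y _; rewrite mulr_suml.
rewrite exchange_big /= /SC mulr_sumr; apply: ler_sum => i _.
apply: le_trans (_ : \sum_Y w i Y * (2 * d (inl i) (inr X)) <= _).
  by apply: ler_sum => Y _; exact: truncated_weight_distance cons tw.
by rewrite -mulr_suml (truncated_weight_sum i tw) mul1r.
Qed.

End SocialCost.

Theorem mainTheorem6 (R : realFieldType) (N A : finType) (s : profile N A)
  (d : N + A -> N + A -> R) (X : A) (w : N -> A -> R) (D : R) (p : A -> R) :
  pseudometric d ->
  consistent s d ->
  truncated_weight s X w ->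
  0 < \sum_(Y : A) wplus w Y * d (inr X) (inr Y) ->
  0 < minSC d X ->
  SC d X <= D * minSC d X ->
  distribution p ->
  (\sum_(Y : A) p Y * SC d Y) / minSC d X
    <= D * (1 + (2 * #|N|%:R * \sum_(Y : A) p Y * d (inr X) (inr Y))
                / (\sum_(Y : A) wplus w Y * d (inr X) (inr Y))).
Proof.
move=> d_metric cons tw S_gt0 minSC_gt0 SC_X_le pd.
have K_ge0 : 0 <= #|N|%:R * \sum_(Y : A) p Y * d (inr X) (inr Y).
  case: d_metric => _ d_ge0 _ _; case: pd => p_ge0 _.
  by rewrite mulr_ge0 ?ler0n // sumr_ge0 // => Y _; rewrite mulr_ge0.
rewrite -[2 * #|N|%:R * _]mulrA.
exact: ratio_bound minSC_gt0 S_gt0 K_ge0 (expected_SC_bound d_metric X pd)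
  SC_X_le (weighted_distance_bound d_metric cons tw).
Qed.
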